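(* Assume the data (A1)–(A5): an associative unital $*$-algebra $\mathcal A$ over $\mathbb C$; an $\mathcal A$-bimodule $\Omega^1$; a $\mathbb C$-linear derivation $d:\mathcal A\to\Omega^1$; a map $\omega:\Omega^1\times\overline{\Omega^1}\to\mathbb C$, linear in both slots, with $\omega(\alpha,\overline\beta)=\overline{\omega(\beta,\overline\alpha)}$, $\omega(f\alpha g,\overline\beta)=\omega(\alpha,\overline{f^*\beta g^*})$, $\omega(\alpha,\overline\alpha)>0$ for $\alpha\ne0$; and a linear $\eta:\mathcal A\to\mathbb C$ with $\eta(f^* )=-\overline{\eta(f)}$ and $\eta([f,g])=\frac{-1}{2\sqrt{-1}}\big(\omega(df,\overline{d(g^* )})-\omega(dg,\overline{d(f^* )})\big)$. Let $\overline{\Omega^1}$, $d^\dagger$, $\mathbb B$ and $\Xi'$ be as in the context. Let $P=(p_{ij})\in\mathrm{Mat}(n\times n,\mathcal A)$ with $P^2=P$, $p_{ij}^*=p_{ji}$, and let $E=\mathcal A^nP$ (row vectors) with the Hermitian form induced from $\mathsf H(\phi,\overline\psi)=\sum_i\phi_i\psi_i^*$. Let $A=A_{can}+\delta$ with $A_{can}=(2P-1)dP$, $\delta\in\mathrm{Mat}(n\times n,\Omega^1)$, $\delta=P\delta P$; it defines the connection $\nabla\phi=d\phi+\phi A$ on $E$, whose Hermitian-conjugate connection is $\nabla^\dagger\phi=d^\dagger\phi+\phi A^\dagger$ with $(A^\dagger)_{ij}:=\overline{A_{ji}}$. Let $u\in\mathrm{Mat}(n\times n,\mathcal A)$ with $u=PuP$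 and $u_{ij}^*=-u_{ji}$, acting on $E$ by $\phi\mapsto\phi u$. Let $C_3:E\to\mathbb B\otimes_{\mathcal A}\mathbb B\otimes_{\mathcal A}\mathbb B\otimes_{\mathcal A}E$ be the composition of $u$ followed by three applications of $\widetilde{\nabla\!\!\!\nabla}:E\to\mathbb B\otimes_{\mathcal A}E$, $\phi\mapsto$ the element with components $(\phi,\nabla\phi,\nabla^\dagger\phi)$; concretely, with $N\in\mathrm{Mat}(n\times n,\mathbb B)$, $N_{jk}:=(\delta_{jk},A_{jk},(A^\dagger)_{jk})$, one has $\operatorname{Trace}_E(C_3)=\big[\sum_{i,j,k,l}u_{ij}N_{jk}\otimes N_{kl}\otimes N_{li}\big]\in\#(\mathbb B\otimes_{\mathcal A}\mathbb B\otimes_{\mathcal A}\mathbb B)$. Then $$\frac{\sqrt{-1}}{2}\,\Xi'\big(\operatorname{Trace}_E(C_3)\big)=\eta(\operatorname{Trace}u)-\omega^{symp}(A,du)+\tfrac12\,\omega^{symp}(A,[A,u]),$$ where $\omega^{symp}(B,C):=\operatorname{Im}\sum_{i,j}\omega(B_{ij},\overline{C_{ij}})$, $du=(du_{ij})$, $[A,u]=Au-uA$. That is, the moment map defined via $\Xi'$ agrees with the moment map of the Hamiltonian action of unitary gauge transformations on connections on $E$.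
   Context: $\overline{\Omega^1}$ is the complex-conjugate space of $\Omega^1$, an $\mathcal A$-bimodule via $f\cdot\overline\beta\cdot g:=\overline{g^*\beta f^*}$; $d^\dagger(f):=-\overline{d(f^* )}$, applied entrywise to vectors. $\mathbb B:=\mathcal A\oplus\Omega^1\oplus\overline{\Omega^1}$ with bimodule structure $f(h,\alpha,\overline\beta)g=(fhg, f\alpha g+df\,hg, f\overline\beta g+d^\dagger f\,hg)$; in $u_{ij}N_{jk}$ the left action of $\mathcal A$ on $\mathbb B$ is used. For a bimodule $G$, $\#(G)=G/\mathrm{span}\{ag-ga\}$; for $\Phi:E\to G\otimes_{\mathcal A}E$, $\operatorname{Trace}_E(\Phi)\in\#(G)$ is the image of $\Phi$ under $\mathrm{Hom}(E,G\otimes_{\mathcal A}E)\cong E^\vee\otimes_{\mathcal A}G\otimes_{\mathcal A}E\to\#(G)$ contracting $E$ with $E^\vee=\mathrm{Hom}_{\mathcal A}(E,\mathcal A)$. $\Xi':\#(\mathbb B\otimes_{\mathcal A}\mathbb B\otimes_{\mathcal A}\mathbb B)\to\mathbb C$ is induced by the trilinear $\Xi$ given on pure tensors (writing $f,\alpha,\overline\alpha$ for elements of the three summands; unlisted type combinations map to $0$) by: $\Xi(f_1\otimes f_2\otimes f_3)=\sum_{\text{cyclic }(a,b,c)}\frac13(-2\sqrt{-1}\eta(f_af_bf_c)-\omega(df_a,d^\dagger f_b\cdot f_c)+\omega(df_b\cdot f_c,d^\dagger f_a))$; $\Xi(\alpha\otimes f\otimes g)=\Xi(g\otimes\alpha\otimes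 f)=\Xi(f\otimes g\otimes\alpha)=\omega(\alpha,d^\dagger f\cdot g)$; $\Xi(\overline\alpha\otimes f\otimes g)=\Xi(g\otimes\overline\alpha\otimes f)=\Xi(f\otimes g\otimes\overline\alpha)=-\omega(df\cdot g,\overline\alpha)$; $\Xi(\alpha\otimes\overline\beta\otimes f)=\Xi(f\otimes\alpha\otimes\overline\beta)=\Xi(\overline\beta\otimes f\otimes\alpha)=-\omega(\alpha,\overline\beta\cdot f)$; $\Xi(\overline\beta\otimes\alpha\otimes f)=\Xi(f\otimes\overline\beta\otimes\alpha)=\Xi(\alpha\otimes f\otimes\overline\beta)=\omega(\alpha\cdot f,\overline\beta)$ (this $\Xi$ is known to descend to $\#$). *)

From HB Require Import structures.
From mathcomp Require Import all_boot all_order all_algebra.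
Set Implicit Arguments.
Unset Strict Implicit.
Unset Printing Implicit Defensive.
Import Order.TTheory GRing.Theory Num.Theory.
Local Open Scope ring_scope.

(* An element  bar(b)  of the conjugate space  bar(Omega^1)
   is represented by b : Om, so [omega a b] stands for  omega(a, bar b)
   (linear in a, conjugate-linear in b). *)
Record DiffData (C : numClosedFieldType) (A : algType C) (Om : lmodType C) := {
  star : A -> A;
  lact : A -> Om -> Om;
  ract : Om -> A -> Om;
  d : A -> Om;
  omega : Om -> Om -> C;
  etaF : A -> C;
  star_add : forall x y, star (x + y) = star x + star y;
  star_scale : forall (c : C) x, star (c *: x) = (c^*) *: star x;
  star_mul : forall x y, star (x * y) = star y * star x;
  star_invol : forall x, star (star x) = x;
  lact_addl : forall x y a, lact (x + y) a = lact x a + lact y a;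
  lact_addr : forall x a b, lact x (a + b) = lact x a + lact x b;
  lact_scalel : forall (c : C) x a, lact (c *: x) a = c *: lact x a;
  lact_scaler : forall (c : C) x a, lact x (c *: a) = c *: lact x a;
  lact_mul : forall x y a, lact (x * y) a = lact x (lact y a);
  lact_one : forall a, lact 1 a = a;
  ract_addl : forall a b x, ract (a + b) x = ract a x + ract b x;
  ract_addr : forall a x y, ract a (x + y) = ract a x + ract a y;
  ract_scalel : forall (c : C) a x, ract (c *: a) x = c *: ract a x;
  ract_scaler : forall (c : C) a x, ract a (c *: x) = c *: ract a x;
  ract_mul : forall a x y, ract a (x * y) = ract (ract a x) y;
  ract_one : forall a, ract a 1 = a;
  lact_ract : forall x a y, lact x (ract a y) = ract (lact x a) y;
  d_add : forall x y, d (x + y) = d x + d y;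
  d_scale : forall (c : C) x, d (c *: x) = c *: d x;
  d_leibniz : forall x y, d (x * y) = ract (d x) y + lact x (d y);
  omega_addl : forall a a' b, omega (a + a') b = omega a b + omega a' b;
  omega_scalel : forall (c : C) a b, omega (c *: a) b = c * omega a b;
  omega_addr : forall a b b', omega a (b + b') = omega a b + omega a b';
  omega_scaler : forall (c : C) a b, omega a (c *: b) = (c^*) * omega a b;
  omega_herm : forall a b, omega a b = (omega b a)^*;
  omega_bimod : forall f g a b,
      omega (ract (lact f a) g) b = omega a (ract (lact (star f) b) (star g));
  omega_pos : forall a, a != 0 -> 0 < omega a a;
  eta_add : forall x y, etaF (x + y) = etaF x + etaF y;
  eta_scale : forall (c : C) x, etaF (c *: x) = c * etaF x;
  eta_star : forall f, etaF (star f) = - (etaF f)^*;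
  eta_comm : forall f g, etaF (f * g - g * f) =
      (-1 / (2 * 'i)) * (omega (d f) (d (star g)) - omega (d g) (d (star f)))
}.

Section Defs.
Variables (C : numClosedFieldType) (A : algType C) (Om : lmodType C).
Variable D : DiffData A Om.

(* Bimodule structure on bar(Omega^1), on representatives:
   f . bar(b) = bar(b star f),   bar(b) . g = bar(star g b). *)
Definition barL (f : A) (b : Om) : Om := ract D b (star D f).
Definition barR (b : Om) (g : A) : Om := lact D (star D g) b.
(* representative of d^dagger f = - bar(d (star f)) *)
Definition dagd (f : A) : Om := - d D (star D f).

(* An element of BB = A (+) Omega^1 (+) bar(Omega^1), the third component
   being the representative of the bar element. *)
Definition BB := (A * Om * Om)%type.

(* left action of A on BB (g = 1 in the bimodule formula; d1 = d^dagger 1 = 0) *)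
Definition BB_lact (f : A) (x : BB) : BB :=
  (f * x.1.1, lact D f x.1.2, barL f x.2).

(* The trilinear form Xi on BB x BB x BB, as the sum of its values on the
   components (unlisted type combinations contribute 0). *)
Definition Xi_fff (f1 f2 f3 : A) : C :=
  let t := fun fa fb fc : A =>
     3^-1 * (- (2 * 'i) * etaF D (fa * fb * fc)
             - omega D (d D fa) (barR (dagd fb) fc)
             + omega D (ract D (d D fb) fc) (dagd fa)) in
  t f1 f2 f3 + t f2 f3 f1 + t f3 f1 f2.

Definition Xi (x y z : BB) : C :=
  let: (f1, a1, b1) := x in
  let: (f2, a2, b2) := y in
  let: (f3, a3, b3) := z in
  Xi_fff f1 f2 f3
  + omega D a1 (barR (dagd f2) f3)
  + omega D a2 (barR (dagd f3) f1)
  + omega D a3 (barR (dagd f1) f2)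
  - omega D (ract D (d D f2) f3) b1
  - omega D (ract D (d D f3) f1) b2
  - omega D (ract D (d D f1) f2) b3
  - omega D a1 (barR b2 f3)
  - omega D a2 (barR b3 f1)
  - omega D a3 (barR b1 f2)
  + omega D (ract D a2 f3) b1
  + omega D (ract D a3 f1) b2
  + omega D (ract D a1 f2) b3.

Variable n : nat.

Definition mxAO (M : 'M[A]_n) (X : 'M[Om]_n) : 'M[Om]_n :=
  \matrix_(i, j) \sum_k lact D (M i k) (X k j).
Definition mxOA (X : 'M[Om]_n) (M : 'M[A]_n) : 'M[Om]_n :=
  \matrix_(i, j) \sum_k ract D (X i k) (M k j).

Definition Acan (P : 'M[A]_n) : 'M[Om]_n :=
  mxAO (\matrix_(i, j) (P i j *+ 2 - (i == j)%:R)) (map_mx (d D) P).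

(* N_jk = (delta_jk, A_jk, (A^dagger)_jk); (A^dagger)_jk = bar(A_kj) *)
Definition Nmx (Am : 'M[Om]_n) (j k : 'I_n) : BB :=
  ((j == k)%:R, Am j k, Am k j).

Definition Xi_trace_C3 (Am : 'M[Om]_n) (u : 'M[A]_n) : C :=
  \sum_i \sum_j \sum_k \sum_l
     Xi (BB_lact (u i j) (Nmx Am j k)) (Nmx Am k l) (Nmx Am l i).

Definition omega_symp (B Cm : 'M[Om]_n) : C :=
  'Im (\sum_i \sum_j omega D (B i j) (Cm i j)).

Definition commAu (Am : 'M[Om]_n) (u : 'M[A]_n) : 'M[Om]_n :=
  mxOA Am u - mxAO u Am.

End Defs.

(* Expanding Xi on [u N (x) N (x) N], the Kronecker-delta components of N
   collapse the quadruple sum to five terms: the eta-term on the diagonal of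
   u, the pairing of A with du and its conjugate, and the two cubic terms
   omega(u A, A) and omega(A u, A).  Antihermiticity of u makes both cubic
   terms purely imaginary, and they are the two halves of the pairing of A
   with [A, u]; everything then recombines through Im z = i (z^* - z) / 2. *)

From HB Require Import structures.
From mathcomp Require Import all_boot all_order all_algebra ring.
Import Order.TTheory GRing.Theory Num.Theory.
Set Implicit Arguments.
Unset Strict Implicit.
Unset Printing Implicit Defensive.
Local Open Scope ring_scope.

Section DiffDataFacts.
Variables (C : numClosedFieldType) (A : algType C) (Om : lmodType C).
Variable D : DiffData A Om.

Lemma star1 : star D 1 = 1.
Proof.
have star1r x : x * star D 1 = x.
  by rewrite -{1}(star_invol D x) -star_mul mul1r star_invol.
by rewrite -{2}(star1r 1) mul1r.
Qed.

Lemma star0 : star D 0 = 0.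
Proof. by rewrite -[X in star D X](scale0r 0) star_scale conjC0 !scale0r. Qed.

Lemma d0 : d D 0 = 0.
Proof. by rewrite -[X in d D X](scale0r 0) d_scale !scale0r. Qed.

Lemma d1 : d D 1 = 0.
Proof.
have := d_leibniz D 1 1; rewrite mulr1 lact_one ract_one => d11.
by apply: (@addrI _ (d D 1)); rewrite addr0 -d11.
Qed.

Lemma dN x : d D (- x) = - d D x.
Proof. by rewrite -(scaleN1r x) d_scale scaleN1r. Qed.

Lemma lact0l a : lact D 0 a = 0.
Proof. by rewrite -(scale0r (0 : A)) lact_scalel scale0r. Qed.

Lemma lact0r x : lact D x 0 = 0.
Proof. by rewrite -[X in lact D x X](scale0r 0) lact_scaler scale0r. Qed.

Lemma lactNl x a : lact D (- x) a = - lact D x a.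
Proof. by rewrite -(scaleN1r x) lact_scalel scaleN1r. Qed.

Lemma ract0l x : ract D 0 x = 0.
Proof. by rewrite -[X in ract D X x](scale0r 0) ract_scalel scale0r. Qed.

Lemma ract0r a : ract D a 0 = 0.
Proof. by rewrite -(scale0r (1 : A)) ract_scaler scale0r. Qed.

Lemma ractNr a x : ract D a (- x) = - ract D a x.
Proof. by rewrite -(scaleN1r x) ract_scaler scaleN1r. Qed.

Lemma eta0 : etaF D 0 = 0.
Proof. by rewrite -(scale0r (0 : A)) eta_scale mul0r. Qed.

Lemma eta_sum I (r : seq I) (P : pred I) (F : I -> A) :
  etaF D (\sum_(i <- r | P i) F i) = \sum_(i <- r | P i) etaF D (F i).
Proof. exact: (big_morph _ (eta_add D) eta0). Qed.

Lemma omega0l b : omega D 0 b = 0.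
Proof. by rewrite -[X in omega D X b](scale0r 0) omega_scalel mul0r. Qed.

Lemma omega0r a : omega D a 0 = 0.
Proof. by rewrite -[X in omega D a X](scale0r 0) omega_scaler conjC0 mul0r. Qed.

Lemma omegaNl a b : omega D (- a) b = - omega D a b.
Proof. by rewrite -(scaleN1r a) omega_scalel mulN1r. Qed.

Lemma omega_suml b I (r : seq I) (P : pred I) (F : I -> Om) :
  omega D (\sum_(i <- r | P i) F i) b = \sum_(i <- r | P i) omega D (F i) b.
Proof.
exact: (big_morph (omega D ^~ b) (fun x y => omega_addl D x y b) (omega0l b)).
Qed.

Lemma conj_omega a b : (omega D a b)^* = omega D b a.
Proof. by rewrite (omega_herm D b a). Qed.

Lemma omega_lactr a g b :
  omega D a (lact D g b) = omega D (lact D (star D g) a) b.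
Proof.
by rewrite -[lact D _ a](ract_one D) omega_bimod star_invol star1 ract_one.
Qed.

Lemma omega_ractr a g b :
  omega D a (ract D b g) = omega D (ract D a (star D g)) b.
Proof. by rewrite -[a in RHS](lact_one D) omega_bimod star1 star_invol lact_one. Qed.

Lemma Xi_lact_delta f (b1 b2 b3 : bool) a1 a1' a2 a2' a3 a3' :
  Xi D (BB_lact D f (b1%:R, a1, a1')) (b2%:R, a2, a2') (b3%:R, a3, a3') =
    (b1 && b2 && b3)%:R * (- (2 * 'i) * etaF D f)
  + (b1 && b2)%:R * omega D a3 (- d D (star D f))
  - (b1 && b2)%:R * omega D (d D f) a3'
  - b3%:R * omega D (lact D f a1) a2'
  - b1%:R * omega D a2 (lact D (star D f) a3')
  - b2%:R * omega D a3 (ract D a1' (star D f))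
  + b3%:R * omega D a2 (ract D a1' (star D f))
  + b1%:R * omega D (ract D a3 f) a2'
  + b2%:R * omega D (lact D f a1) a3'.
Proof.
have thirds (x : C) : 3^-1 * x + 3^-1 * x + 3^-1 * x = x by field.
case: b1; case: b2; case: b3;
  rewrite /Xi /Xi_fff /BB_lact /barL /barR /dagd /= ?mul1r ?mul0r ?mulr1 ?mulr0
    ?star1 ?star0 ?d1 ?d0 ?oppr0 ?lact_one ?ract_one ?lact0l ?lact0r
    ?ract0l ?ract0r ?omega0l ?omega0r ?eta0 ?mul1r ?mul0r ?mulr1 ?mulr0
    ?addr0 ?subr0 ?thirds.
all: by rewrite ?oppr0 ?add0r ?sub0r.
Qed.

End DiffDataFacts.

Section KroneckerSums.
Variables (R : pzRingType) (n : nat).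

Definition sum4 (F : 'I_n -> 'I_n -> 'I_n -> 'I_n -> R) : R :=
  \sum_i \sum_j \sum_k \sum_l F i j k l.

Lemma eq_sum4 F G : (forall i j k l, F i j k l = G i j k l) -> sum4 F = sum4 G.
Proof.
move=> eqFG; apply: eq_bigr => i _; apply: eq_bigr => j _.
by apply: eq_bigr => k _; apply: eq_bigr => l _.
Qed.

Lemma sum4D F G :
  sum4 (fun i j k l => F i j k l + G i j k l) = sum4 F + sum4 G.
Proof.
rewrite /sum4 -big_split; apply: eq_bigr => i _; rewrite -big_split.
apply: eq_bigr => j _; rewrite -big_split; apply: eq_bigr => k _.
exact: big_split.
Qed.

Lemma sum4N F : sum4 (fun i j k l => - F i j k l) = - sum4 F.
Proof.
rewrite /sum4 -sumrN; apply: eq_bigr => i _; rewrite -sumrN.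
apply: eq_bigr => j _; rewrite -sumrN; apply: eq_bigr => k _.
exact: sumrN.
Qed.

Lemma sum_deltal (F : 'I_n -> R) k : \sum_l (k == l)%:R * F l = F k.
Proof.
rewrite (bigD1 k) //= eqxx mul1r big1 ?addr0 // => l.
by rewrite eq_sym => /negbTE ->; rewrite mul0r.
Qed.

Lemma sum_deltar (F : 'I_n -> R) k : \sum_l (l == k)%:R * F l = F k.
Proof. by rewrite -[RHS](sum_deltal F); apply: eq_bigr => l _; rewrite eq_sym. Qed.

Lemma natr_andb (a b : bool) : (a && b)%:R = a%:R * b%:R :> R.
Proof. by rewrite -mulnb natrM. Qed.

Lemma sum4_delta_jk H :
  sum4 (fun i j k l => (j == k)%:R * H i j k l) = \sum_i \sum_j \sum_l H i j j l.
Proof.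
apply: eq_bigr => i _; apply: eq_bigr => j _.
under eq_bigr => k _ do rewrite -mulr_sumr.
exact: (sum_deltal (fun k => \sum_l H i j k l)).
Qed.

Lemma sum4_delta_kl H :
  sum4 (fun i j k l => (k == l)%:R * H i j k l) = \sum_i \sum_j \sum_k H i j k k.
Proof.
apply: eq_bigr => i _; apply: eq_bigr => j _; apply: eq_bigr => k _.
exact: sum_deltal.
Qed.

Lemma sum4_delta_li H :
  sum4 (fun i j k l => (l == i)%:R * H i j k l) = \sum_i \sum_j \sum_k H i j k i.
Proof.
apply: eq_bigr => i _; apply: eq_bigr => j _; apply: eq_bigr => k _.
exact: sum_deltar.
Qed.

Lemma sum4_delta_jkl H :
  sum4 (fun i j k l => ((j == k) && (k == l))%:R * H i j l)
  = \sum_i \sum_j H i j j.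
Proof.
apply: eq_bigr => i _; apply: eq_bigr => j _.
under eq_bigr => k _ do under eq_bigr => l _ do rewrite natr_andb -mulrA.
under eq_bigr => k _ do rewrite -mulr_sumr sum_deltal.
exact: sum_deltal.
Qed.

Lemma sum4_delta_jkli G :
  sum4 (fun i j k l => ((j == k) && (k == l) && (l == i))%:R * G i j)
  = \sum_i G i i.
Proof.
rewrite (eq_sum4 (G := fun i j k l =>
  ((j == k) && (k == l))%:R * ((l == i)%:R * G i j))); last first.
  by move=> i j k l; rewrite natr_andb mulrA.
by rewrite sum4_delta_jkl; apply: eq_bigr => i _; apply: sum_deltar.
Qed.

End KroneckerSums.

Section MomentMap.
Variables (C : numClosedFieldType) (A : algType C) (Om : lmodType C).
Variable D : DiffData A Om.
Variable n : nat.
Implicit Types (Am B Cm : 'M[Om]_n) (u : 'M[A]_n).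

(* Stated with [^*] rather than left to [rmorph_sum]/[rmorphB], whose results
   carry the generic rmorphism coercion that [conj_omega] does not match. *)
Lemma conjC_sum I (r : seq I) (P : pred I) (F : I -> C) :
  (\sum_(i <- r | P i) F i)^* = \sum_(i <- r | P i) (F i)^*.
Proof. exact: rmorph_sum. Qed.

Lemma conjCB (x y : C) : (x - y)^* = x^* - y^*.
Proof. exact: rmorphB. Qed.

Definition mx_omega B Cm : C := \sum_i \sum_j omega D (B i j) (Cm i j).

Definition omega_lact_cubic Am u : C :=
  \sum_i \sum_j \sum_l omega D (lact D (u i j) (Am j l)) (Am i l).

Definition omega_ract_cubic Am u : C :=
  \sum_i \sum_j \sum_l omega D (ract D (Am l i) (u i j)) (Am l j).

Lemma conj_mx_omega B Cm : (mx_omega B Cm)^* = mx_omega Cm B.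
Proof.
rewrite conjC_sum; apply: eq_bigr => i _; rewrite conjC_sum.
by apply: eq_bigr => j _; rewrite conj_omega.
Qed.

Lemma Xi_trace_C3E Am u :
  Xi_trace_C3 D Am u =
    - (2 * 'i) * etaF D (\tr u)
  + \sum_i \sum_j omega D (Am j i) (- d D (star D (u i j)))
  - mx_omega (map_mx (d D) u) Am
  - omega_lact_cubic Am u
  + omega_ract_cubic Am u.
Proof.
rewrite (_ : Xi_trace_C3 D Am u = sum4 (fun i j k l =>
    ((j == k) && (k == l) && (l == i))%:R * (- (2 * 'i) * etaF D (u i j))
  + ((j == k) && (k == l))%:R * omega D (Am l i) (- d D (star D (u i j)))
  - ((j == k) && (k == l))%:R * omega D (d D (u i j)) (Am i l)
  - (l == i)%:R * omega D (lact D (u i j) (Am j k)) (Am l k)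
  - (j == k)%:R * omega D (Am k l) (lact D (star D (u i j)) (Am i l))
  - (k == l)%:R * omega D (Am l i) (ract D (Am k j) (star D (u i j)))
  + (l == i)%:R * omega D (Am k l) (ract D (Am k j) (star D (u i j)))
  + (j == k)%:R * omega D (ract D (Am l i) (u i j)) (Am l k)
  + (k == l)%:R * omega D (lact D (u i j) (Am j k)) (Am i l))); last first.
  by apply: eq_sum4 => i j k l; rewrite /Nmx Xi_lact_delta.
rewrite !sum4D !sum4N sum4_delta_jkli !sum4_delta_jkl !sum4_delta_li
  !sum4_delta_jk !sum4_delta_kl.
rewrite /mxtrace eta_sum mulr_sumr.
under [\sum_i \sum_j \sum_l omega D (Am j l) _]eq_bigr => i _ do
  under eq_bigr => j _ do under eq_bigr => l _ do
    rewrite omega_lactr star_invol.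
have -> : mx_omega (map_mx (d D) u) Am =
    \sum_i \sum_j omega D (d D (u i j)) (Am i j).
  by apply: eq_bigr => i _; apply: eq_bigr => j _; rewrite mxE.
rewrite /omega_lact_cubic /omega_ract_cubic; ring.
Qed.

Lemma omega_symp_mx_omega B Cm : omega_symp D B Cm = 'Im (mx_omega B Cm).
Proof. by []. Qed.

Lemma conj_mx_omega_commAu Am u :
  (mx_omega Am (commAu D Am u))^* = omega_ract_cubic Am u - omega_lact_cubic Am u.
Proof.
rewrite conj_mx_omega /mx_omega.
under eq_bigr => i _ do under eq_bigr => j _ do
  rewrite /commAu /mxOA /mxAO !mxE omega_addl omegaNl !omega_suml.
under eq_bigr => i _ do rewrite sumrB.
rewrite sumrB; congr (_ - _).
  rewrite /omega_ract_cubic [RHS]exchange_big.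
  under [RHS]eq_bigr => j _ do rewrite exchange_big.
  by rewrite [RHS]exchange_big.
by apply: eq_bigr => i _; apply: exchange_big.
Qed.

Section Antihermitian.
Variables (Am : 'M[Om]_n) (u : 'M[A]_n).
Hypothesis u_antiherm : forall i j, u j i = - star D (u i j).

Lemma star_antiherm i j : star D (u i j) = - u j i.
Proof. by rewrite [u j i]u_antiherm opprK. Qed.

Lemma Xi_trace_C3_antiherm :
  Xi_trace_C3 D Am u =
    - (2 * 'i) * etaF D (\tr u)
  + mx_omega Am (map_mx (d D) u) - (mx_omega Am (map_mx (d D) u))^*
  - omega_lact_cubic Am u + omega_ract_cubic Am u.
Proof.
rewrite Xi_trace_C3E conj_mx_omega; do 4!congr (_ + _).
rewrite exchange_big; apply: eq_bigr => i _; apply: eq_bigr => j _.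
by rewrite star_antiherm dN opprK mxE.
Qed.

Lemma conj_omega_lact_cubic : (omega_lact_cubic Am u)^* = - omega_lact_cubic Am u.
Proof.
rewrite /omega_lact_cubic conjC_sum.
under eq_bigr => i _ do rewrite conjC_sum.
under eq_bigr => i _ do under eq_bigr => j _ do rewrite conjC_sum.
rewrite exchange_big -sumrN; apply: eq_bigr => j _.
rewrite -sumrN; apply: eq_bigr => i _; rewrite -sumrN; apply: eq_bigr => l _.
by rewrite conj_omega omega_lactr star_antiherm lactNl omegaNl.
Qed.

Lemma conj_omega_ract_cubic : (omega_ract_cubic Am u)^* = - omega_ract_cubic Am u.
Proof.
rewrite /omega_ract_cubic conjC_sum.
under eq_bigr => i _ do rewrite conjC_sum.
under eq_bigr => i _ do under eq_bigr => j _ do rewrite conjC_sum.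
rewrite exchange_big -sumrN; apply: eq_bigr => j _.
rewrite -sumrN; apply: eq_bigr => i _; rewrite -sumrN; apply: eq_bigr => l _.
by rewrite conj_omega omega_ractr star_antiherm ractNr omegaNl.
Qed.

Lemma mx_omega_commAu :
  mx_omega Am (commAu D Am u) = omega_lact_cubic Am u - omega_ract_cubic Am u.
Proof.
rewrite -[LHS]conjCK conj_mx_omega_commAu conjCB.
by rewrite conj_omega_lact_cubic conj_omega_ract_cubic opprK addrC.
Qed.

Theorem moment_map_antiherm :
  ('i / 2) * Xi_trace_C3 D Am u
  = etaF D (\tr u) - omega_symp D Am (map_mx (d D) u)
    + 2^-1 * omega_symp D Am (commAu D Am u).
Proof.
rewrite Xi_trace_C3_antiherm !omega_symp_mx_omega mx_omega_commAu !ImE.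
rewrite conjCB conj_omega_lact_cubic conj_omega_ract_cubic.
apply/eqP; rewrite -subr_eq0; apply/eqP.
transitivity (- ('i ^+ 2 + 1) * etaF D (\tr u)); first by field.
by rewrite sqrCi addNr oppr0 mul0r.
Qed.

End Antihermitian.

End MomentMap.

Theorem mainTheorem4 (C : numClosedFieldType) (A : algType C) (Om : lmodType C)
  (D : DiffData A Om) (n : nat) (P : 'M[A]_n) (delta : 'M[Om]_n) (u : 'M[A]_n) :
  P *m P = P ->
  (forall i j, P j i = star D (P i j)) ->
  delta = mxOA D (mxAO D P delta) P ->
  u = P *m u *m P ->
  (forall i j, u j i = - star D (u i j)) ->
  let Am := Acan D P + delta in
  ('i / 2) * Xi_trace_C3 D Am u
  = etaF D (\tr u) - omega_symp D Am (map_mx (d D) u)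
    + 2^-1 * omega_symp D Am (commAu D Am u).
Proof. by move=> _ _ _ _ u_antiherm Am; apply: moment_map_antiherm. Qed.
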